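(* Let $S=(|S|,\preccurlyeq,E)$, where $|S|$ is a finite set, $\preccurlyeq$ is a partial ordering on $|S|$, and $E$ is a set of unordered pairs of distinct elements of $|S|$. Let $c$ be the number of connected components of the Hasse diagram of the poset $(|S|,\preccurlyeq)$. For each integer $n\ge 0$ let $C(S,n)$ be the number of maps $\varphi:|S|\to\{1,\dots,n\}$ that are isotone (i.e. $x\preccurlyeq y\Rightarrow \varphi(x)\le\varphi(y)$) and satisfy $\varphi(x)\neq\varphi(y)$ whenever $\{x,y\}\in E$. Then there is a polynomial $f\in\mathbb{Q}[t]$ with $C(S,n)=f(n)$ for all integers $n\ge 0$, and every prime dividing the denominator of a coefficient of $f$ (written in lowest terms) is $\le \mathrm{card}(|S|)-c+1$.
   Context: The Hasse diagram of a finite poset is the graph on its elements in which $x,y$ are adjacent iff one covers the other ($y$ covers $x$ means $x\preccurlyeq y$, $x\ne y$, and there is no $z$ distinct from both with $x\preccurlyeq z\preccurlyeq y$). *)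

From HB Require Import structures.
From mathcomp Require Import all_boot all_order all_algebra.
Set Implicit Arguments. Unset Strict Implicit. Unset Printing Implicit Defensive.

Definition is_partial_order (T : finType) (le : rel T) : Prop :=
  [/\ reflexive le, antisymmetric le & transitive le].

(* E : set of unordered pairs of distinct elements, as a symmetric irreflexive relation. *)
Definition is_simple_edge_rel (T : finType) (E : rel T) : Prop :=
  symmetric E /\ irreflexive E.

Definition covers (T : finType) (le : rel T) (x y : T) : bool :=
  [&& le x y, x != y & ~~ [exists z, [&& z != x, z != y, le x z & le z y]]].

Definition hasse (T : finType) (le : rel T) : rel T :=
  fun x y => covers le x y || covers le y x.

Definition hasse_ncomp (T : finType) (le : rel T) : nat :=
  n_comp (hasse le) T.

(* C(S,n): number of isotone maps |S| -> {1..n} (encoded as 'I_n = {0..n-1},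
   an order-preserving bijection) with phi x != phi y whenever {x,y} in E. *)
Definition C_count (T : finType) (le E : rel T) (n : nat) : nat :=
  #|[set phi : {ffun T -> 'I_n} |
      [forall x, forall y, le x y ==> (phi x <= phi y)%N] &&
      [forall x, forall y, E x y ==> (phi x != phi y)]]|.

(* Count more generally the isotone colorings, with colors [< n], of a subset
   [A] for an arbitrary relation [R] and edge relation [E].  Without edges,
   sorting a coloring by its top color class [U] (an upset) gives
   [C(A, n.+1) = \sum_U C(A :\: U, n)], so [C(A, n)] is an integer combination
   of the binomials ['C(n, j)], [j <= #|A|], whose denominators only involve
   primes [<= #|A|].  If [A] is split by a labelling constant on [R]-related
   pairs, the count is the product of the counts of the label classes, and a
   single class has at most [#|A| - #labels + 1] points.  Edges are removed by
   deletion-contraction, [C_E = C_(E - xy) - C_(E / xy)]: contracting [xy]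
   loses one point and fuses at most two label classes, so the bound
   [#|A| - #labels + 1] survives.  Finally comparable elements are connected
   in the Hasse diagram, so its components form such a labelling. *)

From HB Require Import structures.
From mathcomp Require Import all_boot all_order all_algebra.
From mathcomp Require Import zify ring.
Set Implicit Arguments. Unset Strict Implicit. Unset Printing Implicit Defensive.
Import Order.TTheory GRing.Theory Num.Theory.

Definition smooth (B d : nat) : bool := all (fun p => p <= B) (primes d).

Lemma smoothP B d : 0 < d ->
  reflect (forall p, prime p -> p %| d -> p <= B) (smooth B d).
Proof.
move=> d0; apply: (iffP allP) => [h p pp pd | h p].
  by apply: h; rewrite mem_primes pp d0.
by rewrite mem_primes => /and3P[pp _]; apply: h.
Qed.

Lemma smoothM B m n : 0 < m -> 0 < n -> smooth B m -> smooth B n -> smooth B (m * n).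
Proof.
move=> m0 n0 /allP hm /allP hn; apply/allP => p.
by rewrite primesM // => /orP[/hm|/hn].
Qed.

Lemma smooth_dvd B m n : 0 < n -> m %| n -> smooth B n -> smooth B m.
Proof.
move=> n0 mn /(smoothP B n0) h; have m0 : 0 < m by apply: dvdn_gt0 mn.
by apply/(smoothP B m0) => p pp pm; apply: h pp (dvdn_trans pm mn).
Qed.

Local Open Scope ring_scope.

Lemma denq_dvd (r : rat) (d : nat) : d%:R * r \is a Num.int -> (`|denq r| %| d)%N.
Proof.
move=> /intrP[z e].
have E : (d%:Z * numq r = z * denq r)%R.
  by apply: (@intr_inj rat); rewrite !rmorphM /= numqE -e pmulrn; ring.
have : (`|denq r| %| d * `|numq r|)%N.
  by rewrite -[d]/`|d%:Z|%N -abszM E abszM dvdn_mull.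
by rewrite Gauss_dvdl // coprime_sym coprime_num_den.
Qed.

Definition den_smooth (B : nat) : {pred rat} := fun r => smooth B `|denq r|.

Lemma den_smoothP B r :
  reflect (forall p, prime p -> (p %| `|denq r|)%N -> (p <= B)%N) (r \in den_smooth B).
Proof. by apply: smoothP; rewrite absz_gt0. Qed.

(* Clearing both denominators makes [r - s] and [r * s] integers. *)
Lemma den_smooth_subring B : subring_closed (den_smooth B).
Proof.
have dpos (r : rat) : (0 < `|denq r|)%N by rewrite absz_gt0.
have natden (r : rat) : (`|denq r|)%:R = (denq r)%:~R :> rat.
  by rewrite pmulrn absz_denq.
have closed (r s t : rat) : r \in den_smooth B -> s \in den_smooth B ->
    (denq r)%:~R * (denq s)%:~R * t \is a Num.int -> t \in den_smooth B.
  move=> hr hs; rewrite -!natden -natrM => /denq_dvd ht.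
  by apply: smooth_dvd ht _; [rewrite muln_gt0 !dpos | exact: smoothM].
split=> [//|r s hr hs|r s hr hs]; apply: (closed r s) => //.
- have -> : (denq r)%:~R * (denq s)%:~R * (r - s)
            = (numq r * denq s - numq s * denq r)%:~R :> rat.
    by rewrite rmorphB !rmorphM /= !numqE; ring.
  exact: intr_int.
- have -> : (denq r)%:~R * (denq s)%:~R * (r * s) = (numq r * numq s)%:~R :> rat.
    by rewrite rmorphM /= !numqE; ring.
  exact: intr_int.
Qed.

HB.instance Definition _ (B : nat) :=
  GRing.isSubringClosed.Build rat (den_smooth B) (den_smooth_subring B).

Lemma den_smooth_le B B' : (B <= B')%N -> {subset den_smooth B <= den_smooth B'}.
Proof.
move=> BB' r /den_smoothP h; apply/den_smoothP => p pp /(h p pp).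
by move/leq_trans; apply.
Qed.

Lemma polyOver_den_smooth_le B B' : (B <= B')%N ->
  {subset polyOver (den_smooth B) <= polyOver (den_smooth B')}.
Proof. by move/den_smooth_le; apply: polyOverS. Qed.

Lemma den_smooth_invn n : (n.+1%:R)^-1 \in den_smooth n.+1.
Proof.
apply/den_smoothP => p pp; rewrite -[n.+1%:R]/((n.+1%:Z)%:~R) denqVz //.
exact: dvdn_leq.
Qed.

Fixpoint binpoly (j : nat) : {poly rat} :=
  if j is i.+1 then binpoly i * ('X - i%:R%:P) * (i.+1%:R)^-1%:P else 1.

Lemma binpolyE j (n : nat) : (binpoly j).[n%:R] = 'C(n, j)%:R.
Proof.
elim: j => [|j IH] /=; first by rewrite hornerC bin0.
rewrite !hornerE IH.
apply: (@mulfI _ j.+1%:R); first by rewrite pnatr_eq0.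
rewrite -natrM mul_bin_left.
have [lt_nj|le_jn] := ltnP n j; first by rewrite bin_small // !(mul0r, mulr0, muln0).
by rewrite natrM natrB // mulrC divfK ?pnatr_eq0 // mulrC.
Qed.

Lemma binpoly_over j : binpoly j \is a polyOver (den_smooth j).
Proof.
elim: j => [|j IH] /=; first exact: rpred1.
rewrite rpredM ?polyOverC ?den_smooth_invn //.
rewrite rpredM ?rpredB ?polyOverX ?polyOverC ?rpred_nat //.
exact: polyOver_den_smooth_le IH.
Qed.

Local Close Scope ring_scope.

Lemma card_in_bij (aT rT : finType) (A : {set aT}) (B : {set rT})
    (f : aT -> rT) (g : rT -> aT) :
  {in A, forall a, f a \in B} -> {in B, forall b, g b \in A} ->
  {in A, cancel f g} -> {in B, cancel g f} -> #|A| = #|B|.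
Proof.
move=> fAB gBA fK gK; apply/eqP; rewrite eqn_leq; apply/andP; split.
  rewrite -(card_in_imset (can_in_inj fK)); apply: subset_leq_card.
  by apply/subsetP => _ /imsetP[x xA ->]; apply: fAB.
rewrite -(card_in_imset (can_in_inj gK)); apply: subset_leq_card.
by apply/subsetP => _ /imsetP[x xB ->]; apply: gBA.
Qed.

Definition rel0 {T : Type} : rel T := fun _ _ => false.

Section Colorings.

Variables (T : finType) (K : nat).
Implicit Types (A U : {set T}) (R E : rel T) (phi psi : {ffun T -> 'I_K.+1}).

(* The palette is the fixed type ['I_K.+1], so that counts for all [n <= K]
   live in one type; values outside [A] are pinned to [0]. *)
Definition is_coloring A R E n phi : bool :=
  [&& [forall x, if x \in A then (phi x < n)%N else phi x == ord0],
      [forall x in A, forall y in A, R x y ==> (phi x <= phi y)%N] &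
      [forall x in A, forall y in A, E x y ==> (phi x != phi y)]].

Definition ncolorings A R E n := #|[set phi | is_coloring A R E n phi]|.

Lemma is_coloringP A R E n phi :
  reflect [/\ forall x, x \in A -> (phi x < n)%N,
              forall x, x \notin A -> phi x = ord0,
              forall x y, x \in A -> y \in A -> R x y -> (phi x <= phi y)%N &
              forall x y, x \in A -> y \in A -> E x y -> phi x != phi y]
          (is_coloring A R E n phi).
Proof.
apply: (iffP and3P) => [[/forallP h1 /forall_inP h2 /forall_inP h3]|[h1 h2 h3 h4]].
  split=> [x xA|x xA|x y xA yA|x y xA yA]; first by have := h1 x; rewrite xA.
  - by have := h1 x; rewrite (negbTE xA) => /eqP.
  - by have /forall_inP/(_ y yA)/implyP := h2 x xA.
  - by have /forall_inP/(_ y yA)/implyP := h3 x xA.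
split.
- by apply/forallP => x; case: ifP => xA; [apply: h1 | rewrite h2 ?xA].
- by apply/forall_inP => x xA; apply/forall_inP => y yA; apply/implyP; apply: h3.
- by apply/forall_inP => x xA; apply/forall_inP => y yA; apply/implyP; apply: h4.
Qed.

Lemma ncolorings0 A R E : ncolorings A R E 0 = (A == set0).
Proof.
rewrite /ncolorings; have [->|[a aA]] := set_0Vmem A.
  rewrite eqxx; apply/eqP/cards1P; exists [ffun=> ord0]; apply/setP => phi.
  rewrite !inE; apply/is_coloringP/eqP => [[_ h _ _]|->].
    by apply/ffunP => x; rewrite ffunE h ?inE.
  by split=> // x; rewrite ?inE // ffunE.
have /negbTE-> : A != set0 by apply/set0Pn; exists a.
apply/eqP; rewrite cards_eq0; apply/eqP/setP => phi; rewrite !inE.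
by apply/negbTE/negP => /is_coloringP[h _ _ _]; have := h a aA.
Qed.

Lemma ncolorings_edgeless A R E n :
  (forall x y, x \in A -> y \in A -> ~~ E x y) ->
  ncolorings A R E n = ncolorings A R rel0 n.
Proof.
move=> noE; apply: eq_card => phi; rewrite !inE.
apply/is_coloringP/is_coloringP => -[h1 h2 h3 h4]; split=> // x y xA yA Exy.
by have := noE x y xA yA; rewrite Exy.
Qed.

Lemma ncolorings_loop A R E n x : x \in A -> E x x -> ncolorings A R E n = 0.
Proof.
move=> xA Exx; apply/eqP; rewrite cards_eq0; apply/eqP/setP => phi; rewrite !inE.
by apply/negbTE/negP => /is_coloringP[_ _ _ /(_ x x xA xA Exx)]; rewrite eqxx.
Qed.

Definition upset A R U :=
  (U \subset A) && [forall u in U, forall v in A, R u v ==> (v \in U)].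

Definition top_class A n phi := [set z in A | nat_of_ord (phi z) == n].

Lemma top_class_upset A R n phi :
  is_coloring A R rel0 n.+1 phi -> upset A R (top_class A n phi).
Proof.
move=> /is_coloringP[h1 _ h3 _]; apply/andP; split.
  by apply/subsetP => z; rewrite inE => /andP[].
apply/forall_inP => u; rewrite inE => /andP[uA /eqP un]; apply/forall_inP => v vA.
apply/implyP => Ruv; rewrite inE vA /=; have := h3 _ _ uA vA Ruv; have := h1 _ vA.
by rewrite un; lia.
Qed.

Lemma card_top_class A R n U : (n < K)%N -> upset A R U ->
  #|[set phi | is_coloring A R rel0 n.+1 phi & top_class A n phi == U]|
  = ncolorings (A :\: U) R rel0 n.
Proof.
move=> nK /andP[UA /forall_inP Uup]; have nK' : (n < K.+1)%N by lia.
pose lower phi : {ffun T -> 'I_K.+1} := [ffun z => if z \in U then ord0 else phi z].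
pose raise psi : {ffun T -> 'I_K.+1} := [ffun z => if z \in U then Ordinal nK' else psi z].
have outU x : x \in A -> x \notin U -> x \in A :\: U by rewrite inE => -> ->.
apply: (card_in_bij (f := lower) (g := raise)).
- move=> phi; rewrite !inE => /andP[/is_coloringP[h1 h2 h3 _] /eqP topU].
  have inU z : (z \in U) = (z \in A) && (nat_of_ord (phi z) == n) by rewrite -topU inE.
  apply/is_coloringP; split=> // [x|x|x y].
  + rewrite !inE ffunE => /andP[xU xA]; rewrite (negbTE xU).
    by have := h1 _ xA; move: xU; rewrite inU xA /=; lia.
  + rewrite !inE ffunE negb_and negbK => /orP[->//|xA].
    by rewrite inU (negbTE xA) /= h2.
  + rewrite !inE !ffunE => /andP[xU xA] /andP[yU yA] Rxy.
    by rewrite (negbTE xU) (negbTE yU); apply: h3.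
- move=> psi; rewrite !inE => /is_coloringP[h1 h2 h3 _]; apply/andP; split.
    apply/is_coloringP; split=> // [x xA|x xA|x y xA yA Rxy]; rewrite ?ffunE.
    + by case: ifP => xU //=; have /h1 := outU x xA (negbT xU); lia.
    + case: ifP => xU; first by move: (subsetP UA x xU); rewrite (negbTE xA).
      by apply: h2; rewrite inE xU.
    + case: ifP => xU; case: ifP => yU //=.
      * by have /forall_inP/(_ y yA)/implyP/(_ Rxy) := Uup x xU; rewrite yU.
      * by have /h1 := outU x xA (negbT xU); lia.
      * exact: h3 (outU x xA (negbT xU)) (outU y yA (negbT yU)) Rxy.
  apply/eqP/setP => z; rewrite inE ffunE; case: ifP => zU /=.
    by rewrite eqxx andbT; apply: (subsetP UA).
  by case zA: (z \in A) => //=; have /h1 := outU z zA (negbT zU); lia.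
- move=> phi; rewrite !inE => /andP[_ /eqP topU]; apply/ffunP => z; rewrite !ffunE.
  case zU: (z \in U) => //; apply: val_inj => /=.
  by move: zU; rewrite -topU inE => /andP[_ /eqP].
- move=> psi; rewrite !inE => /is_coloringP[_ h2 _ _]; apply/ffunP => z; rewrite !ffunE.
  by case zU: (z \in U) => //; rewrite h2 // inE zU.
Qed.

Lemma ncoloringsS A R n : (n < K)%N ->
  ncolorings A R rel0 n.+1 = \sum_(U | upset A R U) ncolorings (A :\: U) R rel0 n.
Proof.
move=> nK; rewrite {1}/ncolorings -sum1_card (partition_big (top_class A n) (upset A R)).
  apply: eq_bigr => U UP; rewrite -card_top_class // sum1dep_card.
  by apply: eq_card => phi; rewrite !inE.
by move=> phi; rewrite inE; apply: top_class_upset.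
Qed.

Lemma ncolorings_unroll A R n : (n <= K)%N ->
  ncolorings A R rel0 n = (A == set0) +
    \sum_(k < n) \sum_(U | upset A R U && (U != set0)) ncolorings (A :\: U) R rel0 k.
Proof.
elim: n => [|n IH] nK; first by rewrite ncolorings0 big_ord0 addn0.
rewrite ncoloringsS // big_ord_recr /= addnA -IH ?(ltnW nK) //.
have up0 : upset A R set0.
  by rewrite /upset sub0set; apply/forall_inP => u; rewrite inE.
by rewrite (bigD1 set0) //= setD0.
Qed.

Lemma ncolorings_disjointU A1 A2 R n :
  [disjoint A1 & A2] ->
  (forall x y, x \in A1 -> y \in A2 -> ~~ R x y && ~~ R y x) ->
  ncolorings (A1 :|: A2) R rel0 n = ncolorings A1 R rel0 n * ncolorings A2 R rel0 n.
Proof.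
move=> /pred0P dis noR; rewrite /ncolorings -cardsX.
have notboth x : x \in A1 -> x \in A2 -> False.
  by move=> x1 x2; have /= := dis x; rewrite x1 x2.
pose restr (B : {set T}) phi : {ffun T -> 'I_K.+1} := [ffun z => if z \in B then phi z else ord0].
pose glue (p : {ffun T -> 'I_K.+1} * {ffun T -> 'I_K.+1}) : {ffun T -> 'I_K.+1} :=
  [ffun z => if z \in A1 then p.1 z else p.2 z].
apply: (card_in_bij (f := fun phi => (restr A1 phi, restr A2 phi)) (g := glue)).
- move=> phi; rewrite !inE => /is_coloringP[h1 h2 h3 _].
  have inU1 x : x \in A1 -> x \in A1 :|: A2 by rewrite inE => ->.
  have inU2 x : x \in A2 -> x \in A1 :|: A2 by rewrite inE orbC => ->.
  apply/andP; split; apply/is_coloringP; split=> // [x xB|x xB|x y xB yB Rxy];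
    rewrite ?ffunE ?xB ?yB ?(negbTE xB) //; auto.
- move=> [p1 p2]; rewrite !inE /= => /andP[/is_coloringP[h1 h2 h3 _] /is_coloringP[k1 k2 k3 _]].
  apply/is_coloringP; split=> // [x|x|x y].
  + by rewrite inE ffunE; case: ifP => /= [x1 _|_]; [apply: h1 | apply: k1].
  + by rewrite inE ffunE negb_or => /andP[/negbTE-> x2]; apply: k2.
  + rewrite !inE !ffunE; case x1: (x \in A1); case y1: (y \in A1) => /= xA yA Rxy.
    * exact: h3.
    * by have := noR x y x1 yA; rewrite Rxy.
    * by have := noR y x y1 xA; rewrite Rxy andbF.
    * exact: k3.
- move=> phi; rewrite !inE => /is_coloringP[_ h2 _ _]; apply/ffunP => z; rewrite !ffunE /=.
  by case z1: (z \in A1) => //; case z2: (z \in A2) => //; rewrite h2 // inE z1 z2.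
- move=> [p1 p2]; rewrite !inE /= => /andP[/is_coloringP[_ h2 _ _] /is_coloringP[_ k2 _ _]].
  congr (_, _); apply/ffunP => z; rewrite !ffunE /=.
    by case z1: (z \in A1) => //; rewrite h2 // z1.
  case z2: (z \in A2); last by rewrite k2 // z2.
  by case z1: (z \in A1) => //; case: (notboth z z1 z2).
Qed.

Definition fuse (x y z : T) : T := if z == y then x else z.

Definition rem_edge E (x y : T) : rel T :=
  fun u v => E u v && ~~ (((u == x) && (v == y)) || ((u == y) && (v == x))).

Definition contract_rel (x y : T) (Q : rel T) : rel T :=
  fun u v => [exists a, exists b, [&& fuse x y a == u, fuse x y b == v & Q a b]].

Lemma fuse_neq x y a : x != y -> fuse x y a != y.
Proof. by move=> xy; rewrite /fuse; case: ifP => // /negbT. Qed.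

Lemma fuse_in A x y a : x != y -> x \in A -> y \in A ->
  (fuse x y a \in A :\ y) = (a \in A).
Proof.
move=> xy xA yA; rewrite /fuse !inE.
by case: (a =P y) => [->|/eqP ay]; [rewrite xy xA yA | rewrite ay].
Qed.

Lemma colorings_rem_edge_separating A R E n x y : x \in A -> y \in A -> E x y ->
  [set phi | is_coloring A R (rem_edge E x y) n phi & phi x != phi y]
  = [set phi | is_coloring A R E n phi].
Proof.
move=> xA yA Exy; apply/setP => phi; rewrite !inE.
apply/andP/is_coloringP => [[/is_coloringP[h1 h2 h3 h4] nxy]|[h1 h2 h3 h4]].
  split=> // u v uA vA Euv.
  have [/orP[]/andP[/eqP-> /eqP->] //|hn] :=
    boolP (((u == x) && (v == y)) || ((u == y) && (v == x))); first by rewrite eq_sym.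
  by apply: h4 => //; rewrite /rem_edge Euv hn.
split; last exact: h4 _ _ xA yA Exy.
by apply/is_coloringP; split=> // u v uA vA /andP[Euv _]; apply: h4.
Qed.

Lemma card_colorings_fused A R E n x y : x \in A -> y \in A -> x != y ->
  #|[set phi | is_coloring A R E n phi & phi x == phi y]|
  = ncolorings (A :\ y) (contract_rel x y R) (contract_rel x y E) n.
Proof.
move=> xA yA xy.
pose drop phi : {ffun T -> 'I_K.+1} := [ffun z => if z == y then ord0 else phi z].
pose lift psi : {ffun T -> 'I_K.+1} := [ffun z => psi (fuse x y z)].
have fuseA a : (fuse x y a \in A :\ y) = (a \in A) by apply: fuse_in.
have contract_relP Q u v : u \in A :\ y -> v \in A :\ y -> contract_rel x y Q u v ->
    exists a b, [/\ u = fuse x y a, v = fuse x y b, a \in A, b \in A & Q a b].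
  move=> uA vA /existsP[a /existsP[b /and3P[/eqP au /eqP bv Qab]]].
  by exists a, b; rewrite -fuseA au -fuseA bv.
apply: (card_in_bij (f := drop) (g := lift)).
- move=> phi; rewrite !inE => /andP[/is_coloringP[h1 h2 h3 h4] /eqP pxy].
  have phi_fuse a : phi (fuse x y a) = phi a by rewrite /fuse; case: eqP => [->|].
  apply/is_coloringP; split=> [z|z|u v uA vA|u v uA vA].
  + by rewrite !inE ffunE => /andP[/negbTE-> zA]; apply: h1.
  + by rewrite !inE ffunE negb_and negbK; case: eqP => //= _; apply: h2.
  + move=> /contract_relP-/(_ uA vA)[a [b [-> -> aA bA Rab]]].
    by rewrite !ffunE !(negbTE (fuse_neq _ xy)) !phi_fuse; apply: h3.
  + move=> /contract_relP-/(_ uA vA)[a [b [-> -> aA bA Eab]]].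
    by rewrite !ffunE !(negbTE (fuse_neq _ xy)) !phi_fuse; apply: h4.
- move=> psi; rewrite !inE => /is_coloringP[h1 h2 h3 h4]; apply/andP; split;
    last by rewrite !ffunE /fuse eqxx (negbTE xy).
  apply/is_coloringP; split=> [z zA|z zA|u v uA vA Ruv|u v uA vA Euv]; rewrite !ffunE.
  + by apply: h1; rewrite fuseA.
  + rewrite /fuse; case: eqP => [zy|_]; first by move: zA; rewrite zy yA.
    by apply: h2; rewrite !inE negb_and zA orbT.
  + apply: h3; rewrite ?fuseA //.
    by apply/existsP; exists u; apply/existsP; exists v; rewrite !eqxx Ruv.
  + apply: h4; rewrite ?fuseA //.
    by apply/existsP; exists u; apply/existsP; exists v; rewrite !eqxx Euv.
- move=> phi; rewrite !inE => /andP[_ /eqP pxy]; apply/ffunP => z.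
  by rewrite !ffunE (negbTE (fuse_neq _ xy)) /fuse; case: eqP => [->|].
- move=> psi; rewrite !inE => /is_coloringP[_ h2 _ _]; apply/ffunP => z; rewrite !ffunE.
  case: eqP => [->|/eqP zy]; first by rewrite h2 // !inE eqxx.
  by rewrite /fuse (negbTE zy).
Qed.

Lemma ncolorings_del_contract A R E n x y :
  x \in A -> y \in A -> x != y -> E x y ->
  ncolorings A R E n +
    ncolorings (A :\ y) (contract_rel x y R) (contract_rel x y (rem_edge E x y)) n
  = ncolorings A R (rem_edge E x y) n.
Proof.
move=> xA yA xy Exy; rewrite -card_colorings_fused // /ncolorings.
rewrite -(colorings_rem_edge_separating R n xA yA Exy).
set S := [set phi | is_coloring A R (rem_edge E x y) n phi].
rewrite -(cardsID [set phi : {ffun T -> 'I_K.+1} | phi x == phi y] S) addnC.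
by congr (_ + _); apply: eq_card => phi; rewrite !inE // andbC.
Qed.

End Colorings.

Lemma hockey_stick n j : \sum_(k < n) 'C(k, j) = 'C(n, j.+1).
Proof. by elim: n => [|n IH]; rewrite ?big_ord0 ?bin0n // big_ord_recr /= IH binS. Qed.

(* Only [n <= K] matters: [K] is the palette size in [ncolorings K]. *)
Definition bin_expansion (N : nat) (G : nat -> nat -> nat) :=
  exists a : nat -> nat, forall K n, n <= K -> G K n = \sum_(j < N) a j * 'C(n, j).

Lemma bin_expansion_ext N G1 G2 :
  (forall K n, n <= K -> G1 K n = G2 K n) -> bin_expansion N G2 -> bin_expansion N G1.
Proof. by move=> e [a ha]; exists a => K n nK; rewrite e // ha. Qed.

Lemma bin_expansion_le N N' G : N <= N' -> bin_expansion N G -> bin_expansion N' G.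
Proof.
move=> NN' [a ha]; exists (fun j => if j < N then a j else 0) => K n nK.
rewrite ha // (big_ord_widen N' (fun j => a j * 'C(n, j))) // big_mkcond /=.
by apply: eq_bigr => j _; case: ifP.
Qed.

Lemma bin_expansion_const c : bin_expansion 1 (fun _ _ => c).
Proof. by exists (fun _ => c) => K n _; rewrite big_ord1 bin0 muln1. Qed.

Lemma bin_expansion_add N G1 G2 : bin_expansion N G1 -> bin_expansion N G2 ->
  bin_expansion N (fun K n => G1 K n + G2 K n).
Proof.
move=> [a ha] [b hb]; exists (fun j => a j + b j) => K n nK.
by rewrite ha // hb // -big_split /=; apply: eq_bigr => j _; rewrite mulnDl.
Qed.

Lemma bin_expansion_sum N (I : Type) (s : seq I) (P : pred I)
    (G : I -> nat -> nat -> nat) :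
  (forall i, P i -> bin_expansion N (G i)) ->
  bin_expansion N (fun K n => \sum_(i <- s | P i) G i K n).
Proof.
move=> h; elim: s => [|i s IH]; first by exists (fun _ => 0) => K n _; rewrite big_nil big1.
have [Pi|nPi] := boolP (P i); last first.
  by apply: bin_expansion_ext IH => K n _; rewrite big_cons (negbTE nPi).
apply: (bin_expansion_ext (G2 := fun K n => G i K n + \sum_(j <- s | P j) G j K n)).
  by move=> K n _; rewrite big_cons Pi.
exact: bin_expansion_add (h i Pi) IH.
Qed.

Lemma bin_expansion_partial_sum N G : bin_expansion N G ->
  bin_expansion N.+1 (fun K n => \sum_(k < n) G K k).
Proof.
move=> [a ha]; exists (fun j => if j is i.+1 then a i else 0) => K n nK.
rewrite big_ord_recl /= mul0n add0n.
transitivity (\sum_(k < n) \sum_(j < N) a j * 'C(k, j)).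
  by apply: eq_bigr => k _; rewrite ha // (leq_trans (ltnW (ltn_ord k))).
by rewrite exchange_big /=; apply: eq_bigr => j _; rewrite -big_distrr /= hockey_stick.
Qed.

Lemma ncolorings_bin_expansion (T : finType) (R : rel T) (A : {set T}) :
  bin_expansion #|A|.+1 (fun K n => ncolorings K A R rel0 n).
Proof.
have [m] := ubnP #|A|; elim: m A => // m IH A /ltnSE Am.
pose G K k := \sum_(U | upset A R U && (U != set0)) ncolorings K (A :\: U) R rel0 k.
apply: (bin_expansion_ext (G2 := fun K n => (A == set0) + \sum_(k < n) G K k)).
  by move=> K n; apply: ncolorings_unroll.
apply: bin_expansion_add; first exact: bin_expansion_le (bin_expansion_const _).
apply: bin_expansion_partial_sum; apply: bin_expansion_sum => U /andP[/andP[UA _] U0].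
have ltA : #|A :\: U| < #|A|.
  by move: U0; rewrite -card_gt0 -(cardsID U A) (setIidPr UA); lia.
by apply: bin_expansion_le (IH _ _); lia.
Qed.

Local Open Scope ring_scope.

Definition poly_smooth (B : nat) (F : nat -> nat -> nat) : Prop :=
  exists2 f : {poly rat}, f \is a polyOver (den_smooth B) &
    forall K n, (n <= K)%N -> (F K n)%:R = f.[n%:R].

Lemma poly_smooth_le B B' F : (B <= B')%N -> poly_smooth B F -> poly_smooth B' F.
Proof. by move=> BB' [f fB ef]; exists f => //; apply: polyOver_den_smooth_le fB. Qed.

Lemma poly_smooth_ext B F1 F2 :
  (forall K n, (n <= K)%N -> F1 K n = F2 K n) -> poly_smooth B F2 -> poly_smooth B F1.
Proof. by move=> e [f fB ef]; exists f => // K n nK; rewrite e // ef. Qed.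

Lemma poly_smooth0 B : poly_smooth B (fun _ _ => 0%N).
Proof. by exists 0 => [|K n _]; rewrite ?rpred0 ?horner0. Qed.

Lemma poly_smoothM B1 B2 F1 F2 : poly_smooth B1 F1 -> poly_smooth B2 F2 ->
  poly_smooth (maxn B1 B2) (fun K n => F1 K n * F2 K n)%N.
Proof.
move=> [f1 f1B e1] [f2 f2B e2]; exists (f1 * f2) => [|K n nK].
  apply: rpredM; [apply: polyOver_den_smooth_le f1B | apply: polyOver_den_smooth_le f2B].
    exact: leq_maxl.
  exact: leq_maxr.
by rewrite natrM hornerM e1 // e2.
Qed.

Lemma poly_smoothB B F1 F2 : poly_smooth B F1 -> poly_smooth B F2 ->
  (forall K n, (n <= K)%N -> (F2 K n <= F1 K n)%N) ->
  poly_smooth B (fun K n => F1 K n - F2 K n)%N.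
Proof.
move=> [f1 f1B e1] [f2 f2B e2] le21; exists (f1 - f2) => [|K n nK]; first exact: rpredB.
by rewrite natrB ?le21 // hornerD hornerN e1 // e2.
Qed.

Lemma bin_expansion_poly N F : bin_expansion N.+1 F -> poly_smooth N F.
Proof.
move=> [a ha]; exists (\sum_(j < N.+1) (a j)%:R%:P * binpoly j) => [|K n nK].
  apply: rpred_sum => j _; rewrite rpredM ?polyOverC ?rpred_nat //.
  by apply: polyOver_den_smooth_le (binpoly_over j); rewrite -ltnS.
rewrite ha // horner_sum natr_sum; apply: eq_bigr => j _.
by rewrite hornerM hornerC binpolyE natrM.
Qed.

Local Close Scope ring_scope.

Section Components.

Variables (T L : finType) (R : rel T) (g : T -> L).

Definition label_invariant (A : {set T}) :=
  forall x y, x \in A -> y \in A -> R x y -> g x = g y.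

Lemma ncolorings_edgeless_smooth A : label_invariant A ->
  poly_smooth (#|A| - #|g @: A| + 1) (fun K n => ncolorings K A R rel0 n).
Proof.
have [m] := ubnP #|A|; elim: m A => // m IH A /ltnSE Am gR.
have [A0|[a aA]] := set_0Vmem A.
  apply: poly_smooth_le (bin_expansion_poly (ncolorings_bin_expansion R A)).
  by rewrite A0 cards0.
set F := [set z in A | g z == g a]; set A2 := A :\: F.
have FA : F \subset A by apply/subsetP => z; rewrite inE => /andP[].
have cardA : #|A| = #|F| + #|A2| by rewrite -(cardsID F A) (setIidPr FA).
have F0 : 0 < #|F| by rewrite card_gt0; apply/set0Pn; exists a; rewrite inE aA eqxx.
have gA : g @: A = g a |: g @: A2.
  apply/setP => l; rewrite !inE; apply/imsetP/orP => [[z zA ->]|[/eqP->|/imsetP[z]]].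
  - have [zF|zF] := boolP (z \in F); first by left; move: zF; rewrite inE => /andP[].
    by right; apply: imset_f; rewrite inE zF.
  - by exists a.
  - by rewrite inE => /andP[_ zA] ->; exists z.
have gaA2 : g a \notin g @: A2.
  by apply/imsetP => -[z]; rewrite !inE => /andP[zF zA] e; move: zF; rewrite zA e eqxx.
have cardgA : #|g @: A| = (#|g @: A2|).+1 by rewrite gA cardsU1 gaA2.
have gA2 : #|g @: A2| <= #|A2| by apply: leq_imset_card.
apply: (poly_smooth_ext (F2 := fun K n => ncolorings K F R rel0 n * ncolorings K A2 R rel0 n)).
  move=> K n _; have {1}-> : A = F :|: A2.
    by apply/setP => z; rewrite !inE; case: (z \in A); case: (g z == g a).
  apply: ncolorings_disjointU => [|x y]; last rewrite !inE.
    by rewrite -setI_eq0; apply/eqP/setP => z; rewrite !inE; case: (z \in A); case: (g z == g a).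
  move=> /andP[xA /eqP gx] /andP[+ yA]; apply: contraR; rewrite negb_and !negbK.
  rewrite yA -gx; case/orP => [/(gR _ _ xA yA)|/(gR _ _ yA xA)] ->; exact: eqxx.
apply: poly_smooth_le (poly_smoothM (bin_expansion_poly (ncolorings_bin_expansion R F))
                                    (IH A2 _ _)).
- by rewrite geq_max; apply/andP; split; lia.
- by lia.
- by move=> x y; rewrite !inE => /andP[_ xA] /andP[_ yA]; apply: gR.
Qed.

End Components.

Definition edges (T : finType) (A : {set T}) (E : rel T) :=
  [set p : T * T | [&& p.1 \in A, p.2 \in A & E p.1 p.2]].

Section Contraction.

Variables (T L : finType) (g : T -> L) (x y : T).
Implicit Types (A : {set T}) (R E : rel T).

Lemma card_edges_rem_edge A E : x \in A -> y \in A -> E x y ->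
  #|edges A (rem_edge E x y)| < #|edges A E|.
Proof.
move=> xA yA Exy; apply: proper_card; apply/properP; split.
  by apply/subsetP => -[u v]; rewrite !inE /= => /and3P[-> -> /andP[]].
by exists (x, y); rewrite !inE /= ?xA ?yA ?Exy // /rem_edge !eqxx andbF.
Qed.

Definition relabel (z : T) : L := if g z == g y then g x else g z.

Lemma relabel_fuse a : relabel (fuse x y a) = relabel a.
Proof. by rewrite /relabel /fuse; case: (a =P y) => [->|//]; rewrite !eqxx; case: ifP. Qed.

Lemma card_relabel A : y \in A ->
  #|g @: A| <= (#|relabel @: (A :\ y)|).+1.
Proof.
move=> yA; apply: leq_trans (_ : #|g y |: (relabel @: (A :\ y))| <= _).
  apply/subset_leq_card/subsetP => _ /imsetP[z zA ->]; rewrite !inE.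
  have [//|gzy] := boolP (g z == g y).
  have -> : g z = relabel z by rewrite /relabel (negbTE gzy).
  by apply: imset_f; rewrite !inE zA andbT; apply: contraNneq gzy => ->.
by rewrite cardsU1; case: (_ \notin _).
Qed.

Lemma label_invariant_contract A R : x != y -> x \in A -> y \in A ->
  label_invariant R g A -> label_invariant (contract_rel x y R) relabel (A :\ y).
Proof.
move=> xy xA yA gR u v uA vA /existsP[a /existsP[b /and3P[/eqP au /eqP bv Rab]]].
move: uA vA; rewrite -au -bv !fuse_in // => aA bA.
by rewrite !relabel_fuse /relabel (gR a b).
Qed.

End Contraction.

Lemma ncolorings_smooth (T L : finType) (g : T -> L) (A : {set T}) (R E : rel T) :
  label_invariant R g A ->
  poly_smooth (#|A| - #|g @: A| + 1) (fun K n => ncolorings K A R E n).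
Proof.
have [m] := ubnP #|A|; elim: m A R E g => // m IHm A R E g /ltnSE Am gR.
have [k] := ubnP #|edges A E|; elim: k E => // k IHk E /ltnSE Ek.
have [noE|[[x y]]] := set_0Vmem (edges A E).
  apply: poly_smooth_ext (ncolorings_edgeless_smooth gR) => K n _.
  apply: ncolorings_edgeless => x y xA yA; apply/negP => Exy.
  by move/setP/(_ (x, y)): noE; rewrite !inE /= xA yA Exy.
rewrite inE /= => /and3P[xA yA Exy].
have [exy|xy] := eqVneq x y.
  apply: poly_smooth_ext (poly_smooth0 _) => K n _.
  by apply: (ncolorings_loop K R n xA); rewrite {2}exy.
have delcon K n := ncolorings_del_contract K R n xA yA xy Exy.
apply: (poly_smooth_ext (F2 := fun K n => ncolorings K A R (rem_edge E x y) n -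
    ncolorings K (A :\ y) (contract_rel x y R) (contract_rel x y (rem_edge E x y)) n)).
  by move=> K n _; rewrite -delcon addnK.
apply: poly_smoothB => [||K n _]; last by rewrite -delcon leq_addl.
  by apply: IHk; apply: leq_trans (card_edges_rem_edge xA yA Exy) Ek.
have cardA : #|A| = (#|A :\ y|).+1 by rewrite (cardsD1 y A) yA.
have ltA : #|A :\ y| < m by rewrite -ltnS -cardA.
apply: poly_smooth_le (IHm _ _ _ _ ltA (label_invariant_contract xy xA yA gR)).
have := card_relabel g x yA; have := leq_imset_card (relabel g x y) (A :\ y); lia.
Qed.

Section Hasse.

Variables (T : finType) (le : rel T).
Hypothesis le_order : is_partial_order le.

Definition segment (u v : T) := [set w | le u w && le w v].

Lemma card_segment_lt a b c d : le a b -> le b c -> le c d -> (a != b) || (c != d) ->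
  #|segment b c| < #|segment a d|.
Proof.
have [rf an tr] := le_order; move=> lab lbc lcd neq.
have lac := tr _ _ _ lab lbc; have lbd := tr _ _ _ lbc lcd.
apply/proper_card/properP; split.
  apply/subsetP => w; rewrite !inE => /andP[lbw lwc].
  by rewrite (tr _ _ _ lab lbw) (tr _ _ _ lwc lcd).
case/orP: neq => [ab|cd]; [exists a | exists d];
  rewrite !inE ?rf ?(tr _ _ _ lac lcd) ?(tr _ _ _ lab lbd) //=.
- by apply: contra ab => /andP[lba _]; rewrite (an a b) ?lab ?lba.
- by apply: contra cd => /andP[_ ldc]; rewrite (an c d) ?lcd ?ldc.
Qed.

Lemma connect_hasse x y : le x y -> connect (hasse le) x y.
Proof.
have [rf _ _] := le_order.
have [k] := ubnP #|segment x y|; elim: k x y => // k IH x y /ltnSE hk lxy.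
have [<-|xy] := eqVneq x y; first exact: connect0.
have [cxy|] := boolP (covers le x y); first by apply: connect1; rewrite /hasse cxy.
rewrite /covers lxy xy /= negbK => /existsP[z /and4P[zx zy lxz lzy]].
apply: connect_trans (IH x z _ lxz) (IH z y _ lzy); apply: leq_trans hk.
  by apply: card_segment_lt; rewrite ?rf ?zy ?orbT.
by apply: card_segment_lt; rewrite ?rf // eq_sym zx.
Qed.

End Hasse.

Lemma C_count_ncolorings (T : finType) (le E : rel T) n :
  C_count le E n = ncolorings n [set: T] le E n.
Proof.
pose widen (phi : {ffun T -> 'I_n}) : {ffun T -> 'I_n.+1} :=
  [ffun z => widen_ord (leqnSn n) (phi z)].
have widen_inj : injective widen.
  move=> p q /ffunP e; apply/ffunP => z; apply: val_inj.
  by have := e z; rewrite !ffunE => /(congr1 val).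
rewrite /C_count -(card_imset _ widen_inj); apply: eq_card => psi; rewrite !inE.
apply/imsetP/is_coloringP => [[phi]|[h1 _ h3 h4]].
  rewrite inE => /andP[/forallP h1 /forallP h2] ->.
  split=> [x _|x|x y _ _ lxy|x y _ _ Exy]; rewrite ?inE // !ffunE /=.
  - exact: ltn_ord.
  - by have /forallP/(_ y)/implyP := h1 x; apply.
  - have /forallP/(_ y)/implyP/(_ Exy) := h2 x.
    by apply: contra => /eqP e; apply/eqP/val_inj; have := congr1 val e.
have lt_n z : psi z < n by apply: h1; rewrite inE.
exists [ffun z => Ordinal (lt_n z)]; last by apply/ffunP => z; rewrite !ffunE; apply: val_inj.
rewrite inE; apply/andP; split; do 2 apply/forallP => ?; apply/implyP => h; rewrite !ffunE /=.
  exact: h3.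
apply: contra (h4 _ _ (in_setT _) (in_setT _) h) => /eqP e.
by apply/eqP/val_inj; have := congr1 val e.
Qed.

Lemma card_imset_root (T : finType) (e : rel T) :
  connect_sym e -> #|fingraph.root e @: [set: T]| = n_comp e T.
Proof.
move=> e_sym; apply: eq_card => x; rewrite !inE /=; apply/imsetP/idP.
  by move=> [y _ ->]; rewrite andbT; apply: roots_root.
by move=> /andP[/eqP rx _]; exists x; rewrite ?inE.
Qed.

Local Open Scope ring_scope.

Theorem theorem1p1 (T : finType) (le E : rel T)
  (hle : is_partial_order le) (hE : is_simple_edge_rel E) :
  exists f : {poly rat},
    (forall n : nat, (C_count le E n)%:R = f.[n%:R]) /\
    (forall (i p : nat), prime p -> (p %| `|denq f`_i|)%N ->
       (p <= #|T| - hasse_ncomp le + 1)%N).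
Proof.
have hasse_sym : connect_sym (hasse le).
  by apply: sym_connect_sym => x y; rewrite /hasse orbC.
have root_invariant : label_invariant le (fingraph.root (hasse le)) [set: T].
  by move=> x y _ _ /(connect_hasse hle) cxy; apply/eqP; rewrite root_connect.
have [f fB ef] := ncolorings_smooth E root_invariant.
exists f; split=> [n|i]; first by rewrite C_count_ncolorings ef.
have /den_smoothP := polyOverP fB i.
by rewrite cardsT card_imset_root.
Qed.
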